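(* Let $A\in\mathcal{B}(p)$ (defined in the context). Then $A\succ 0$ if and only if $\phi(A)\succ 0$, where explicitly $$\phi(A)=\begin{pmatrix}\alpha_1 & c_{1,2} & \cdots & c_{1,p}\\ c_{1,2} & \alpha_2 & \ddots & \vdots\\ \vdots & \ddots & \ddots & c_{p-1,p}\\ c_{1,p} & \cdots & c_{p-1,p} & \alpha_p\end{pmatrix},\qquad \alpha_k=\frac{1}{n_k}+\frac{n_k-1}{n_k}b_k .$$
   Context: All matrices are real; $\succ 0$ means symmetric positive definite. $J_m$ is the $m\times m$ matrix of ones, $J_{m,q}=\mathbf 1_m\mathbf 1_q^\top$. For integers $p\ge1$ and $n_1,\dots,n_p\ge 1$, $n=\sum_k n_k$, $\mathcal{B}(p)$ is the set of symmetric $n\times n$ block matrices $A=(A_{k,\ell})_{1\le k,\ell\le p}$ (block $A_{k,\ell}$ of size $n_k\times n_\ell$) with diagonal blocks $A_{k,k}=(1-b_k)I_{n_k}+b_kJ_{n_k}$ (ones on the diagonal, $b_k$ off the diagonal) and off-diagonal blocks $A_{k,\ell}=A_{\ell,k}^\top=c_{k,\ell}J_{n_k,n_\ell}$ for $k<\ell$, where all parameters $b_k,c_{k,\ell}$ lie in $]-1,1[$, with the convention $b_k=0$ when $n_k=1$. The block average map $\phi$ sends $A$ to the $p\times p$ matrix $[\phi(A)]_{k,\ell}=\frac{1}{n_kn_\ell}\sum_{i\in G_k,j\in G_\ell}A_{i,j}$, where $G_1$ is the first $n_1$ indices, $G_2$ the next $n_2$, and so on. *)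

From HB Require Import structures.
From mathcomp Require Import all_boot all_order all_algebra.
Set Implicit Arguments. Unset Strict Implicit. Unset Printing Implicit Defensive.
Import Order.TTheory GRing.Theory Num.Theory.
Local Open Scope ring_scope.

Definition posdef (R : realFieldType) (m : nat) (A : 'M[R]_m) : Prop :=
  A^T = A /\ forall x : 'cV[R]_m, x != 0 -> 0 < (x^T *m A *m x) ord0 ord0.

(* Symmetrised off-diagonal parameter: c_{k,l} for k<l, c_{l,k} for k>l
   (only the values c k l with k < l are ever used). *)
Definition csym (R : Type) (p : nat) (c : 'I_p -> 'I_p -> R) (k l : 'I_p) : R :=
  if (k < l)%N then c k l else c l k.

(* The block matrix of B(p) with parameters b, c and block sizes n_:
   diagonal block k = (1-b_k) I + b_k J (ones on the diagonal, b_k off it),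
   off-diagonal block (k,l) = c_{k,l} J (with c_{l,k} := c_{k,l} for l<k). *)
Definition Bmat (R : realFieldType) (p : nat) (n_ : 'I_p -> nat)
    (b : 'I_p -> R) (c : 'I_p -> 'I_p -> R) : 'M[R]_(\sum_(k < p) n_ k) :=
  mxblock (fun k l : 'I_p =>
    \matrix_(i < n_ k, j < n_ l)
      (if k == l then (if (i : nat) == j then 1 else b k) else csym c k l)).
Arguments Bmat {R p} n_ b c.

Definition phi (R : realFieldType) (p : nat) (n_ : 'I_p -> nat)
    (A : 'M[R]_(\sum_(k < p) n_ k)) : 'M[R]_p :=
  \matrix_(k, l) (((n_ k)%:R * (n_ l)%:R)^-1 *
     \sum_(i < n_ k) \sum_(j < n_ l) (@submxblock R p p n_ n_ A k l) i j).
Arguments phi {R p} n_ A.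

From HB Require Import structures.
From mathcomp Require Import all_boot all_order all_algebra.
From mathcomp Require Import ring.
Import Order.TTheory GRing.Theory Num.Theory.
Set Implicit Arguments. Unset Strict Implicit. Unset Printing Implicit Defensive.
Local Open Scope ring_scope.

(** Write [d k = 1 - b k] and [M] for the [p x p] matrix with [b k] on the
    diagonal and [c k l] off it. Then [A] is [diag (d (blk s))] plus the lift
    [M (blk s) (blk t)] of [M] to all indices, and averaging over blocks gives
    [phi A = diag (d k / n_k) + M]. With [S_k] and [Q_k] the sum and the sum of
    squares of the entries of [x] in block [k],
      [x^T A x = \sum_k d_k Q_k + S^T M S] and
      [y^T phi(A) y = \sum_k d_k y_k^2 / n_k + y^T M y].
    Spreading [y_k] evenly over block [k] turns the second form into the first,
    so [A > 0] gives [phi A > 0]. Conversely Cauchy-Schwarz [S_k^2 / n_k <= Q_k]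
    and [d_k > 0] bound [x^T A x] below by the second form at [y = S], and when
    [S = 0] the term [\sum_k d_k Q_k] alone is positive. *)

Local Notation qform A x := ((x^T *m A *m x) ord0 ord0).

Section QuadraticForms.
Variables (R : realFieldType) (m : nat).
Implicit Types (A B : 'M[R]_m) (x : 'cV[R]_m).

Lemma qformE A x : qform A x = \sum_i \sum_j x i ord0 * A i j * x j ord0.
Proof.
rewrite mxE exchange_big; apply: eq_bigr => j _.
by rewrite mxE big_distrl; apply: eq_bigr => i _; rewrite !mxE.
Qed.

Lemma qformD A B x : qform (A + B) x = qform A x + qform B x.
Proof. by rewrite mulmxDr mulmxDl mxE. Qed.

Lemma qform0 A : qform A (0 : 'cV[R]_m) = 0.
Proof. by rewrite mulmx0 mxE. Qed.

Lemma qform_diag (d : 'rV[R]_m) x :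
  qform (diag_mx d) x = \sum_i d ord0 i * x i ord0 ^+ 2.
Proof.
rewrite qformE; apply: eq_bigr => i _.
rewrite (bigD1 i) //= big1 => [|j /negPf ji]; last by rewrite mxE eq_sym ji mulr0 mul0r.
by rewrite mxE eqxx mulr1n addr0; ring.
Qed.

End QuadraticForms.

Lemma sumrMn_pred1 (V : nmodType) (I : finType) (P : pred I) i (a : V) :
  \sum_(j | P j) a *+ (i == j) = a *+ P i.
Proof.
rewrite big_mkcond (bigD1 i) //= eqxx big1 ?addr0 => [|j /negPf ij]; first by case: (P i).
by rewrite eq_sym ij; case: (P j).
Qed.

Section BlockLift.
Variables (R : realFieldType) (p : nat) (n_ : 'I_p -> nat).
Local Notation N := (\sum_(k < p) n_ k).
Local Notation blk := (@tagnat.sig1 p n_).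
Implicit Types (x : 'cV[R]_N) (y : 'cV[R]_p) (M : 'M[R]_p) (d : 'I_p -> R).

Lemma big_block (F : 'I_N -> R) k :
  \sum_(s | blk s == k) F s = \sum_(j < n_ k) F (tagnat.Rank k j).
Proof.
rewrite (reindex (@tagnat.rank p n_)); last exact: onW_bij tagnat.rank_bij.
rewrite (eq_bigl (fun q => tag q == k)) => [|q]; last by rewrite /= tagnat.rankE tagnat.Rank1K.
rewrite (eq_bigr (fun q => F (tagnat.Rank (tag q) (tagged q)))) => [|q _];
  last by rewrite tagnat.rankE.
transitivity (\sum_(i | i == k) \sum_(j < n_ i) F (tagnat.Rank i j)); last first.
  by rewrite big_pred1_eq.
rewrite (sig_big_dep (fun i : 'I_p => i == k) (fun _ _ => true)) /=.
by apply: eq_bigl => q; rewrite andbT.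
Qed.

Lemma sum_block_const k (a : R) : \sum_(s | blk s == k) a = (n_ k)%:R * a.
Proof. by rewrite big_block sumr_const card_ord mulr_natl. Qed.

Lemma sum_by_blocks (F : 'I_N -> R) : \sum_s F s = \sum_k \sum_(s | blk s == k) F s.
Proof. exact: partition_big. Qed.

Definition block_sum x : 'cV[R]_p := \col_k \sum_(s | blk s == k) x s ord0.

Definition block_sqsum x k : R := \sum_(s | blk s == k) x s ord0 ^+ 2.

Definition block_spread y : 'cV[R]_N := \col_s (y (blk s) ord0 / (n_ (blk s))%:R).

Definition lift_mx M : 'M[R]_N := \matrix_(s, t) M (blk s) (blk t).

Local Notation lifted d M := (diag_mx (\row_s d (blk s)) + lift_mx M).
Local Notation compressed d M := (diag_mx (\row_k (d k / (n_ k)%:R)) + M).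

Lemma phiE (A : 'M[R]_N) k l : phi n_ A k l =
  ((n_ k)%:R * (n_ l)%:R)^-1 * \sum_(s | blk s == k) \sum_(t | blk t == l) A s t.
Proof.
rewrite mxE big_block; congr (_ * _); apply: eq_bigr => i _.
by rewrite big_block; apply: eq_bigr => j _; rewrite !mxE.
Qed.

Lemma tr_lift_mx M : (lift_mx M)^T = lift_mx M^T.
Proof. by apply/matrixP => s t; rewrite !mxE. Qed.

Lemma block_sqsum_ge0 x k : 0 <= block_sqsum x k.
Proof. by apply: sumr_ge0 => s _; exact: sqr_ge0. Qed.

Lemma qform_lift M x : qform (lift_mx M) x = qform M (block_sum x).
Proof.
rewrite !qformE sum_by_blocks; apply: eq_bigr => k _.
rewrite (eq_bigr (fun s => \sum_l \sum_(t | blk t == l) x s ord0 * M k l * x t ord0))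
  => [|s /eqP <-]; last first.
  by rewrite sum_by_blocks; apply: eq_bigr => l _; apply: eq_bigr => t /eqP <-; rewrite mxE.
rewrite exchange_big; apply: eq_bigr => l _.
rewrite !mxE -mulrA mulr_suml; apply: eq_bigr => s _.
by rewrite !mulr_sumr; apply: eq_bigr => t _; rewrite mulrA.
Qed.

Lemma qform_block_diag d x :
  qform (diag_mx (\row_s d (blk s))) x = \sum_k d k * block_sqsum x k.
Proof.
rewrite qform_diag sum_by_blocks; apply: eq_bigr => k _.
by rewrite big_distrr; apply: eq_bigr => s /eqP <-; rewrite mxE.
Qed.

Lemma block_sum_sqr_le x k : (0 < n_ k)%N ->
  block_sum x k ord0 ^+ 2 / (n_ k)%:R <= block_sqsum x k.
Proof.
move=> nk_gt0; have nk0 : (n_ k)%:R != 0 :> R by rewrite pnatr_eq0 -lt0n.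
set S := block_sum x k ord0; set mean := S / (n_ k)%:R.
have S_def : S = \sum_(s | blk s == k) x s ord0 by rewrite /S mxE.
have spread : \sum_(s | blk s == k) (x s ord0 - mean) ^+ 2 =
    block_sqsum x k - S ^+ 2 / (n_ k)%:R.
  rewrite (eq_bigr (fun s => x s ord0 ^+ 2 - 2 * mean * x s ord0 + mean ^+ 2)) => [|s _];
    last by ring.
  rewrite !big_split /= sumrN -mulr_sumr -S_def sum_block_const /mean /block_sqsum.
  by field.
rewrite -subr_ge0 -spread; apply: sumr_ge0 => s _; exact: sqr_ge0.
Qed.

Lemma weighted_block_sqsum_gt0 d x : (forall k, 0 < d k) -> x != 0 ->
  0 < \sum_k d k * block_sqsum x k.
Proof.
move=> d_gt0 x_neq0.
have term_ge0 k : 0 <= d k * block_sqsum x k by rewrite mulr_ge0 ?block_sqsum_ge0 ?ltW.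
rewrite lt0r sumr_ge0 ?andbT //.
apply: contra x_neq0 => /eqP/(psumr_eq0P (fun k _ => term_ge0 k)) sum0.
apply/eqP/colP => s; rewrite mxE; apply/eqP; rewrite -sqrf_eq0.
have /eqP := sum0 (blk s) isT; rewrite mulf_eq0 gt_eqF //= => /eqP.
by move/(psumr_eq0P (fun t _ => sqr_ge0 (x t ord0))) ->.
Qed.

Section PositiveBlockSizes.
Hypothesis n_gt0 : forall k, (0 < n_ k)%N.

Let n_neq0 k : (n_ k)%:R != 0 :> R.
Proof. by rewrite pnatr_eq0 -lt0n. Qed.

Lemma block_sum_spread y : block_sum (block_spread y) = y.
Proof.
apply/colP => k; rewrite mxE.
rewrite (eq_bigr (fun _ => y k ord0 / (n_ k)%:R)) => [|s /eqP <-]; last by rewrite mxE.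
by rewrite sum_block_const mulrC divfK.
Qed.

Lemma block_sqsum_spread y k : block_sqsum (block_spread y) k = y k ord0 ^+ 2 / (n_ k)%:R.
Proof.
rewrite /block_sqsum (eq_bigr (fun _ => (y k ord0 / (n_ k)%:R) ^+ 2)) => [|s /eqP <-];
  last by rewrite mxE.
by rewrite sum_block_const; field.
Qed.

Lemma qform_lifted_spread d M y :
  qform (lifted d M) (block_spread y) = qform (compressed d M) y.
Proof.
rewrite !qformD qform_lift block_sum_spread qform_block_diag qform_diag; congr (_ + _).
by apply: eq_bigr => k _; rewrite block_sqsum_spread mxE mulrA mulrAC.
Qed.

Lemma qform_compressed_le_lifted d M x : (forall k, 0 <= d k) ->
  qform (compressed d M) (block_sum x) <= qform (lifted d M) x.
Proof.
move=> d_ge0; rewrite !qformD qform_lift qform_block_diag qform_diag lerD2r.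
apply: ler_sum => k _.
by rewrite mxE mulrAC -mulrA ler_wpM2l // block_sum_sqr_le.
Qed.

Lemma phi_lifted d M : phi n_ (lifted d M) = compressed d M.
Proof.
apply/matrixP => k l; rewrite phiE !mxE.
rewrite (eq_bigr (fun _ => d k *+ (k == l) + (n_ l)%:R * M k l)) => [|s /eqP <-]; last first.
  rewrite (eq_bigr (fun t => d (blk s) *+ (s == t) + M (blk s) l)) => [|t /eqP <-];
    last by rewrite !mxE.
  by rewrite big_split /= sumrMn_pred1 sum_block_const.
rewrite sum_block_const.
by case: eqVneq => [<-|_]; rewrite ?mulr1n ?mulr0n ?add0r; field; rewrite ?n_neq0.
Qed.

Lemma posdef_lifted d M : (forall k, 0 < d k) -> M^T = M ->
  posdef (lifted d M) <-> posdef (compressed d M).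
Proof.
move=> d_gt0 M_sym; rewrite /posdef !linearD /= !tr_diag_mx tr_lift_mx M_sym.
split=> -[_ pos]; split=> // v v_neq0.
  rewrite -qform_lifted_spread; apply: pos; apply: contra v_neq0 => /eqP v0.
  apply/eqP; rewrite -[v]block_sum_spread v0.
  by apply/colP => k; rewrite !mxE big1 // => s _; rewrite mxE.
have [S0|S_neq0] := eqVneq (block_sum v) 0.
  rewrite qformD qform_lift S0 qform0 addr0 qform_block_diag.
  exact: weighted_block_sqsum_gt0.
apply: lt_le_trans (pos _ S_neq0) _.
by apply: qform_compressed_le_lifted => k; exact: ltW.
Qed.

End PositiveBlockSizes.

End BlockLift.

Lemma csym_sym (T : Type) (p : nat) (c : 'I_p -> 'I_p -> T) k l : csym c k l = csym c l k.
Proof.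
by rewrite /csym; case: ltngtP => // /val_inj ->.
Qed.

Section BlockParameters.
Variables (R : realFieldType) (p : nat) (n_ : 'I_p -> nat).
Variables (b : 'I_p -> R) (c : 'I_p -> 'I_p -> R).
Local Notation blk := (@tagnat.sig1 p n_).

Definition param_mx : 'M[R]_p := \matrix_(k, l) (if k == l then b k else csym c k l).

Lemma tr_param_mx : param_mx^T = param_mx.
Proof.
by apply/matrixP => k l; rewrite !mxE eq_sym; case: eqVneq => [->|_]; rewrite // csym_sym.
Qed.

Lemma Bmat_lifted :
  Bmat n_ b c = diag_mx (\row_s (1 - b (blk s))) + lift_mx n_ param_mx.
Proof.
apply/matrixP => s t; rewrite !mxE.
case: eqVneq => [blk_st|blk_neq]; last first.
  have /negPf -> : s != t by apply: contraNneq blk_neq => ->.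
  by rewrite mulr0n add0r.
have -> : (tagnat.sig2 s == tagnat.sig2 t :> nat) = (s == t).
  have := tagnat.eq_Rank (tagnat.sig2 s) (tagnat.sig2 t).
  by rewrite !tagnat.sig2K (introT eqP blk_st).
by case: (s == t); rewrite ?mulr1n ?mulr0n ?add0r ?subrK.
Qed.

Lemma phi_Bmat : (forall k, (0 < n_ k)%N) ->
  phi n_ (Bmat n_ b c) =
    \matrix_(k, l) (if k == l then (n_ k)%:R^-1 + ((n_ k)%:R - 1) / (n_ k)%:R * b k
                    else csym c k l).
Proof.
move=> n_gt0; rewrite Bmat_lifted (phi_lifted n_gt0 (fun k => 1 - b k)).
apply/matrixP => k l; rewrite !mxE.
have n_neq0 : (n_ k)%:R != 0 :> R by rewrite pnatr_eq0 -lt0n.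
by case: (k == l); rewrite ?mulr1n ?mulr0n ?add0r //; field.
Qed.

End BlockParameters.

Theorem theorem2 (R : realFieldType) (p : nat) (n_ : 'I_p -> nat)
    (b : 'I_p -> R) (c : 'I_p -> 'I_p -> R)
    (hp : (0 < p)%N)
    (hn : forall k, (0 < n_ k)%N)
    (hb : forall k, -1 < b k < 1)
    (hc : forall k l : 'I_p, (k < l)%N -> -1 < c k l < 1)
    (hb1 : forall k, n_ k = 1%N -> b k = 0) :
  phi n_ (Bmat n_ b c) =
    \matrix_(k, l) (if k == l then (n_ k)%:R^-1 + ((n_ k)%:R - 1) / (n_ k)%:R * b k
                    else csym c k l)
  /\ (posdef (Bmat n_ b c) <-> posdef (phi n_ (Bmat n_ b c))).
Proof.
split; first exact: phi_Bmat.
rewrite Bmat_lifted (phi_lifted hn (fun k => 1 - b k)).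
apply: posdef_lifted => //; last exact: tr_param_mx.
by move=> k; case/andP: (hb k) => _; rewrite subr_gt0.
Qed.
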